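(* In the kernel LSTD setting described in the context, let $\widehat\Delta=\widehat\theta-\theta^*$. Then $$(1-\bar\gamma)\|\widehat\Delta\|_\mu^2\le\rho^2(\widehat\Delta)=T_1+T_2+T_3-\lambda_n\|\widehat\Delta\|_{\mathbb{H}}^2,$$ where $T_1=\langle\widehat\Delta,\ \widehat\Sigma_{\rm cov}(r-\theta^* )+\widehat y_0+\widehat\Sigma_{\rm cr}\theta^*\rangle_{\mathbb{H}}$, $T_2=\lambda_n\langle\widehat\Delta,r-\theta^*\rangle_{\mathbb{H}}$, and $T_3=\langle\widehat\Delta,(\Gamma-\widehat\Gamma)\widehat\Delta\rangle_{\mathbb{H}}$ with $\widehat\Gamma=\widehat\Sigma_{\rm cov}-\widehat\Sigma_{\rm cr}$ and $\Gamma=\Sigma_{\rm cov}-\Sigma_{\rm cr}$.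
   Context: Markov reward process: state space $\mathcal{X}$, transition kernel $\mathcal{P}$ with stationary distribution $\mu$, known reward $r$, discount $\gamma\in[0,1)$; $\|f\|_\mu=(\int f^2d\mu)^{1/2}$. For $k\ge0$, $(\mathcal{T}^{(k)}f)(x)=\mathbb{E}[\sum_{\ell=0}^{k-1}\gamma^\ell r(X_\ell)+\gamma^kf(X_k)\mid X_0=x]$; for $K\ge1$ and $w\in\mathbb{R}^K$ in the probability simplex, $\mathcal{T}^{(w)}=\sum_kw_k\mathcal{T}^{(k)}$ and $\bar\gamma=\sum_kw_k\gamma^k$. $\mathbb{H}$ is an RKHS with kernel $\mathcal{K}$ containing constants and $r$, $\mathcal{R}_x=\mathcal{K}(\cdot,x)$, and $g\otimes h$ is $f\mapsto g\langle h,f\rangle_{\mathbb{H}}$. With $(X_0,\dots,X_K)$ a chain from $X_0\sim\mu$: $\Sigma_{\rm cov}=\mathbb{E}[\mathcal{R}_{X_0}\otimes\mathcal{R}_{X_0}]$, $\Sigma_{\rm cr}=\mathbb{E}[\mathcal{R}_{X_0}\otimes\sum_kw_k\gamma^k\mathcal{R}_{X_k}]$, $y_0=\mathbb{E}[\mathcal{R}_{X_0}\sum_kw_k\sum_{\ell=1}^{k-1}\gamma^\ell r(X_\ell)]$; $\theta^*\in\mathbb{H}$ solves $\Sigma_{\rm cov}\theta^*=\Sigma_{\rm cov}r+y_0+\Sigma_{\rm cr}\theta^*$. Given a trajectory $x_1,\dots,x_n$ ($n>K$, $\tilde n=n-K$): $\widehat\Sigma_{\rm cov}=\frac1{\tilde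 n}\sum_{t=1}^{\tilde n}\mathcal{R}_{x_t}\otimes\mathcal{R}_{x_t}$, $\widehat\Sigma_{\rm cr}=\frac1{\tilde n}\sum_{t=1}^{\tilde n}\mathcal{R}_{x_t}\otimes\sum_kw_k\gamma^k\mathcal{R}_{x_{t+k}}$, $\widehat y_0=\frac1{\tilde n}\sum_{t=1}^{\tilde n}\mathcal{R}_{x_t}\sum_kw_k\sum_{\ell=1}^{k-1}\gamma^\ell r(x_{t+\ell})$; for $\lambda_n>0$, $\widehat\theta$ solves $(\widehat\Sigma_{\rm cov}+\lambda_nI)\widehat\theta=(\widehat\Sigma_{\rm cov}+\lambda_nI)r+\widehat y_0+\widehat\Sigma_{\rm cr}\widehat\theta$. The functional $\rho$ is $\rho(f)=\big(\mathbb{E}[f^2(X_0)-\sum_{k=1}^Kw_k\gamma^kf(X_0)f(X_k)]\big)^{1/2}$ with $(X_0,\dots,X_K)$ a chain from $X_0\sim\mu$. *)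

From HB Require Import structures.
From mathcomp Require Import all_boot all_order all_algebra.
From mathcomp Require Import all_classical all_reals all_analysis.
Set Implicit Arguments. Unset Strict Implicit. Unset Printing Implicit Defensive.
Import Order.TTheory GRing.Theory Num.Theory.
Local Open Scope classical_set_scope.
Local Open Scope ring_scope.

Section KernelLSTD.
Context (R : realType) (d : measure_display) (X : measurableType d).
Context (H : lmodType R) (ip : H -> H -> R) (Rx : X -> H).

Definition ev (f : H) : X -> R := fun x => ip f (Rx x).

(* H (with inner product ip and kernel sections Rx) is an RKHS on X with
   kernel K(x,y) = ip (Rx x) (Rx y):  a real Hilbert space of functions
   on X (evaluation is injective, i.e. elements are identified with the
   functions ev f), with the reproducing property built into ev. *)
Definition is_rkhs : Prop :=
  [/\ (forall a f g h, ip (a *: f + g) h = a * ip f h + ip g h),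
      (forall f g, ip f g = ip g f),
      (forall f, 0 <= ip f f),
      (forall f, ip f f = 0 -> f = 0) &
      (forall f g, ev f =1 ev g -> f = g)] /\
      (forall u : nat -> H,
        (forall e : R, 0 < e -> exists N, forall m p, (N <= m)%N -> (N <= p)%N ->
            Num.sqrt (ip (u m - u p) (u m - u p)) < e) ->
        exists l : H, forall e : R, 0 < e -> exists N, forall m, (N <= m)%N ->
            Num.sqrt (ip (u m - l) (u m - l)) < e).

Definition tens (g h : H) : H -> H := fun f => ip h f *: g.

Variable P : R.-pker X ~> X.
Definition Pop (h : X -> R) : X -> R := fun x => (\int[P x]_y h y)%R.
Fixpoint Piter (k : nat) (h : X -> R) : X -> R :=
  if k is k'.+1 then Pop (Piter k' h) else h.

Variable mu : probability X R.

(* E[ f(X_0) g(X_k) ] for the chain started at X_0 ~ mu with kernel P *)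
Definition Epair (k : nat) (f g : X -> R) : R :=
  (\int[mu]_x (f x * Piter k g x))%R.

Definition muNorm2 (f : X -> R) : R := (\int[mu]_x (f x ^+ 2))%R.

Definition rho (K : nat) (w : nat -> R) (gamma : R) (f : X -> R) : R :=
  Num.sqrt (Epair 0 f f - \sum_(1 <= k < K.+1) w k * gamma ^+ k * Epair k f f).

End KernelLSTD.

Definition stationary (R : realType) (d : measure_display) (X : measurableType d)
  (P : R.-pker X ~> X) (mu : probability X R) : Prop :=
  forall A, measurable A -> (\int[mu]_x P x A = mu A)%E.

Definition in_simplex (R : realType) (K : nat) (w : nat -> R) : Prop :=
  (forall k, (1 <= k <= K)%N -> 0 <= w k) /\ \sum_(1 <= k < K.+1) w k = 1.

Definition gbar (R : realType) (K : nat) (w : nat -> R) (gamma : R) : R :=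
  \sum_(1 <= k < K.+1) w k * gamma ^+ k.

Section Empirical.
Context (R : realType) (X : Type) (H : lmodType R) (ip : H -> H -> R) (Rx : X -> H).
Context (K n : nat) (w : nat -> R) (gamma : R) (r : X -> R) (x : nat -> X).

Definition ntil : nat := (n - K)%N.

Definition Scov_hat (f : H) : H :=
  (ntil%:R)^-1 *: \sum_(1 <= t < ntil.+1) tens ip (Rx (x t)) (Rx (x t)) f.

Definition Scr_hat (f : H) : H :=
  (ntil%:R)^-1 *: \sum_(1 <= t < ntil.+1)
     tens ip (Rx (x t)) (\sum_(1 <= k < K.+1) (w k * gamma ^+ k) *: Rx (x (t + k)%N)) f.

Definition y_hat : H :=
  (ntil%:R)^-1 *: \sum_(1 <= t < ntil.+1)
     (\sum_(1 <= k < K.+1) w k * \sum_(1 <= l < k) gamma ^+ l * r (x (t + l)%N)) *: Rx (x t).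
End Empirical.

From HB Require Import structures.
From mathcomp Require Import all_boot all_order all_algebra.
From mathcomp Require Import all_classical all_reals all_analysis.
From mathcomp Require Import measurable_realfun.
From mathcomp Require Import ring lra.
Import Order.TTheory GRing.Theory Num.Theory.
Local Open Scope classical_set_scope.
Local Open Scope ring_scope.
Set Implicit Arguments. Unset Strict Implicit. Unset Printing Implicit Defensive.

(* Let f be the evaluation function of Delta.  Since P^k is a Markov operator,
   Jensen gives (P^k f)^2 <= P^k (f^2), and stationarity gives
   E[(P^k g)(X_0)] = E[g(X_0)]; hence
   E[f(X_0) f(X_k)] <= (E f(X_0)^2 + E (P^k f^2)(X_0)) / 2 = ||f||_mu^2.
   Summing against the weights w_k gamma^k bounds the quantity under the square
   root in rho from below by (1 - gbar) ||f||_mu^2 >= 0, which gives the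
   inequality and shows rho^2(Delta) = <Delta, Gamma Delta>.  The identity is
   then algebra: pairing with Delta the difference of the regularized empirical
   normal equation solved by theta_hat and the same expression at theta_star
   yields T1 + T2 = <Delta, Gamma_hat Delta> + lam ||Delta||^2. *)

Section bounded_measurable.
Context {R : realType} {d : measure_display} {X : measurableType d}.

Definition bounded_measurable (f : X -> R) :=
  measurable_fun setT f /\ exists M : R, forall x, `|f x| <= M.

Lemma bounded_measurable_integrable (m : {measure set X -> \bar R}) f :
  (m setT < +oo)%E -> bounded_measurable f -> m.-integrable setT (EFin \o f).
Proof.
move=> mfin [mf [M fM]]; apply: measurable_bounded_integrable => //.
exists M; split; first exact: num_real.
by move=> N /ltW MN x _; exact: le_trans (fM x) MN.
Qed.

Lemma bounded_measurable_cst c : bounded_measurable (fun _ => c).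
Proof. by split; [exact: measurable_cst | exists `|c|]. Qed.

Lemma bounded_measurableD f g : bounded_measurable f -> bounded_measurable g ->
  bounded_measurable (fun x => f x + g x).
Proof.
move=> [mf [M fM]] [mg [N gN]]; split; first exact: measurable_funD.
by exists (M + N) => x; exact: le_trans (ler_normD _ _) (lerD (fM x) (gN x)).
Qed.

Lemma bounded_measurableM f g : bounded_measurable f -> bounded_measurable g ->
  bounded_measurable (fun x => f x * g x).
Proof.
move=> [mf [M fM]] [mg [N gN]]; split; first exact: measurable_funM.
by exists (M * N) => x; rewrite normrM; exact: ler_pM.
Qed.

Lemma bounded_measurable_sqr f : bounded_measurable f ->
  bounded_measurable (fun x => f x ^+ 2).
Proof. by move=> bf; under eq_fun do rewrite expr2; exact: bounded_measurableM. Qed.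

Lemma Rintegral_sqr_le (m : {measure set X -> \bar R}) h :
  m setT = 1%E -> bounded_measurable h ->
  (\int[m]_y h y) ^+ 2 <= \int[m]_y h y ^+ 2.
Proof.
move=> m1 bh; set c := \int[m]_y h y.
have int f : bounded_measurable f -> m.-integrable setT (EFin \o f).
  by apply: bounded_measurable_integrable; rewrite m1 ltry.
have : \int[m]_y (2 * c * h y) <= \int[m]_y (c ^+ 2 + h y ^+ 2).
  apply: le_Rintegral => //.
  - by apply: int; exact: bounded_measurableM (bounded_measurable_cst _) bh.
  - by apply: int; exact: bounded_measurableD (bounded_measurable_cst _)
      (bounded_measurable_sqr bh).
  move=> y _; rewrite -subr_ge0.
  have -> : c ^+ 2 + h y ^+ 2 - 2 * c * h y = (c - h y) ^+ 2 by ring.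
  exact: sqr_ge0.
rewrite RintegralZl //; last exact: int.
rewrite RintegralD //; last 2 first.
- exact: int (bounded_measurable_cst _).
- exact: int (bounded_measurable_sqr bh).
rewrite Rintegral_cst // m1 mulr1 -/c; nra.
Qed.

End bounded_measurable.

Section transition_kernel.
Context {R : realType} {d : measure_display} {X : measurableType d}.
Variable P : R.-pker X ~> X.

Let P_setT x : P x setT = 1%E.
Proof. exact: prob_kernel. Qed.

Let P_fin x : (P x setT < +oo)%E.
Proof. by rewrite P_setT ltry. Qed.

Lemma Pop_cst c x : Pop P (fun _ => c) x = c.
Proof. by rewrite /Pop Rintegral_cst // P_setT mulr1. Qed.

Lemma measurable_Pop h : bounded_measurable h -> measurable_fun setT (Pop P h).
Proof.
move=> [mh [M hM]].
have hM0 y : (0 <= h y + M)%R.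
  by have := hM y; rewrite ler_norml => /andP[+ _]; lra.
have int x f : bounded_measurable f -> (P x).-integrable setT (EFin \o f).
  exact: bounded_measurable_integrable (P_fin x).
(* measurable_fun_integral_kernel needs a nonnegative integrand: shift by M *)
have -> : Pop P h = (fun x => fine (\int[P x]_y (h y + M)%:E)%E - M).
  apply/funext => x; rewrite -[RHS]/(\int[P x]_y (h y + M) - M).
  rewrite RintegralD //; last 2 first.
  - exact: int (conj mh (ex_intro _ M hM)).
  - exact: int (bounded_measurable_cst _).
  by rewrite -/(Pop P (fun _ => M) x) Pop_cst addrK.
apply: measurable_funB; last exact: measurable_cst.
apply: measurableT_comp (fine_measurable measurableT) _.
apply: (measurable_fun_integral_kernel (l := P)).
- by move=> U mU; exact: measurable_kernel.
- by move=> y; rewrite lee_fin.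
- by apply/measurable_EFinP; apply: measurable_funD.
Qed.

Lemma bounded_measurable_Pop h :
  bounded_measurable h -> bounded_measurable (Pop P h).
Proof.
move=> bh; split; first exact: measurable_Pop.
have [mh [M hM]] := bh; exists M => x.
apply: le_trans (le_normr_Rintegral measurableT
  (bounded_measurable_integrable (P_fin x) bh)) _.
rewrite -[leRHS](Pop_cst M x); apply: le_Rintegral => //.
  apply: bounded_measurable_integrable (P_fin x) _.
  by split; [exact: measurableT_comp | exists M => y; rewrite normr_id].
exact: bounded_measurable_integrable (P_fin x) (bounded_measurable_cst _).
Qed.

Lemma le_Pop h1 h2 x : bounded_measurable h1 -> bounded_measurable h2 ->
  (forall y, h1 y <= h2 y) -> Pop P h1 x <= Pop P h2 x.
Proof.
by move=> b1 b2 h12; apply: le_Rintegral => //;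
  exact: bounded_measurable_integrable (P_fin x) _.
Qed.

Lemma Pop_ge0 h x : (forall y, 0 <= h y) -> 0 <= Pop P h x.
Proof. by move=> h0; apply: Rintegral_ge0. Qed.

Lemma bounded_measurable_Piter k h :
  bounded_measurable h -> bounded_measurable (Piter P k h).
Proof. by move=> bh; elim: k => [//|k IH] /=; exact: bounded_measurable_Pop. Qed.

Lemma Piter_ge0 k h x : (forall y, 0 <= h y) -> 0 <= Piter P k h x.
Proof. by move=> h0; elim: k x => [//|k IH] x /=; exact: Pop_ge0. Qed.

Lemma sqr_Piter_le k h x : bounded_measurable h ->
  Piter P k h x ^+ 2 <= Piter P k (fun y => h y ^+ 2) x.
Proof.
move=> bh; elim: k x => [//|k IH] x /=.
have bPh := bounded_measurable_Piter k bh.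
apply: le_trans (Rintegral_sqr_le (P_setT x) bPh) _.
apply: le_Pop IH => //; first exact: bounded_measurable_sqr.
exact: bounded_measurable_Piter (bounded_measurable_sqr bh).
Qed.

Section stationary.
Variable mu : probability X R.
Hypothesis Pmu : stationary P mu.

Lemma ge0_integral_stationary (g : X -> \bar R) :
  (forall y, 0 <= g y)%E -> measurable_fun setT g ->
  (\int[mu]_x \int[P x]_y g y = \int[mu]_x g x)%E.
Proof.
move=> g0 mg.
(* the left-hand side integrates against kcomp of the constant kernel mu with P *)
pose l : R.-sfker X ~> X :=
  kprobability (measurable_cst (mu : pprobability X R) : measurable_fun setT _).
pose k : R.-sfker (X * X) ~> X := @kernel.kernel_snd _ _ _ X X X R P.
rewrite -[LHS]/(\int[l point]_x \int[k (point, x)]_y g y)%E.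
rewrite -integral_kcomp //.
by apply: eq_measure_integral => A mA _; exact: Pmu.
Qed.

Lemma Rintegral_Pop g : bounded_measurable g -> (forall y, 0 <= g y) ->
  \int[mu]_x Pop P g x = \int[mu]_x g x.
Proof.
move=> bg g0; have [mg _] := bg.
rewrite /Rintegral -[in RHS]ge0_integral_stationary; last 2 first.
- by move=> y; rewrite lee_fin.
- exact/measurable_EFinP.
congr fine; apply: eq_integral => x _; rewrite /Pop /Rintegral fineK //.
exact: integrable_fin_num (bounded_measurable_integrable (P_fin x) bg).
Qed.

Lemma Rintegral_Piter k g : bounded_measurable g -> (forall y, 0 <= g y) ->
  \int[mu]_x Piter P k g x = \int[mu]_x g x.
Proof.
move=> bg g0; elim: k => [//|k IH] /=.
rewrite Rintegral_Pop //; first exact: bounded_measurable_Piter.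
by move=> y; exact: Piter_ge0.
Qed.

Lemma Epair_le_muNorm2 k f : bounded_measurable f ->
  Epair P mu k f f <= muNorm2 mu f.
Proof.
move=> bf; rewrite /Epair /muNorm2.
set Q := Piter P k (fun y => f y ^+ 2).
have bQ : bounded_measurable Q.
  exact: bounded_measurable_Piter (bounded_measurable_sqr bf).
have mu_fin : (mu setT < +oo)%E by rewrite probability_setT ltry.
have int g : bounded_measurable g -> mu.-integrable setT (EFin \o g).
  exact: bounded_measurable_integrable mu_fin.
(* f (P^k f) <= (f^2 + (P^k f)^2) / 2 <= (f^2 + P^k (f^2)) / 2 *)
apply: (@le_trans _ _ (\int[mu]_x (2^-1 * (f x ^+ 2 + Q x)))).
  apply: le_Rintegral => //.
  - by apply: int; exact: bounded_measurableM bf (bounded_measurable_Piter k bf).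
  - by apply: int; exact: bounded_measurableM (bounded_measurable_cst _)
      (bounded_measurableD (bounded_measurable_sqr bf) bQ).
  move=> x _; have := sqr_Piter_le k x bf; rewrite -/Q.
  have := sqr_ge0 (f x - Piter P k f x); rewrite sqrrB; nra.
rewrite RintegralZl //; last first.
  exact: int (bounded_measurableD (bounded_measurable_sqr bf) bQ).
rewrite RintegralD //; [|exact: int (bounded_measurable_sqr bf)|exact: int bQ].
rewrite Rintegral_Piter //; first lra.
- exact: bounded_measurable_sqr.
- by move=> y; exact: sqr_ge0.
Qed.

End stationary.

End transition_kernel.

Section inner_product.
Context {R : realType} {H : lmodType R} (ip : H -> H -> R).
Hypothesis ip_linear : forall a f g h, ip (a *: f + g) h = a * ip f h + ip g h.
Hypothesis ipC : forall f g, ip f g = ip g f.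

Lemma ip0l h : ip 0 h = 0.
Proof. by have := ip_linear 1 0 0 h; rewrite scaler0 addr0 mul1r; lra. Qed.

Lemma ipDl a b h : ip (a + b) h = ip a h + ip b h.
Proof. by have := ip_linear 1 a b h; rewrite scale1r mul1r. Qed.

Lemma ipZl c a h : ip (c *: a) h = c * ip a h.
Proof. by have := ip_linear c a 0 h; rewrite addr0 ip0l addr0. Qed.

Lemma ipNl a h : ip (- a) h = - ip a h.
Proof. by rewrite -scaleN1r ipZl mulN1r. Qed.

Lemma ipDr h a b : ip h (a + b) = ip h a + ip h b.
Proof. by rewrite ipC ipDl !(ipC h). Qed.

Lemma ipZr h c a : ip h (c *: a) = c * ip h a.
Proof. by rewrite ipC ipZl (ipC h). Qed.

Lemma ipNr h a : ip h (- a) = - ip h a.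
Proof. by rewrite ipC ipNl (ipC h). Qed.

Lemma ipBr h a b : ip h (a - b) = ip h a - ip h b.
Proof. by rewrite ipDr ipNr. Qed.

Lemma normr_ip_le (ip_ge0 : forall f, 0 <= ip f f) a b :
  `|ip a b| <= (ip a a + ip b b) / 2.
Proof.
have := ip_ge0 (a - b); have := ip_ge0 (a + b).
rewrite !(ipDl, ipDr, ipNl, ipNr) (ipC b a) ler_norml => ? ?.
by apply/andP; split; lra.
Qed.

Lemma bounded_measurable_ev {d : measure_display} {X : measurableType d}
    (Rx : X -> H) (kappa : R) f :
  (forall f, 0 <= ip f f) -> (forall z, ip (Rx z) (Rx z) <= kappa) ->
  measurable_fun setT (ev ip Rx f) -> bounded_measurable (ev ip Rx f).
Proof.
move=> ip_ge0 Rx_kappa mf; split => //.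
exists ((ip f f + kappa) / 2) => z; apply: le_trans (normr_ip_le ip_ge0 _ _) _.
by have := Rx_kappa z; lra.
Qed.

Lemma tensB g h : {morph tens ip g h : a b / a - b}.
Proof. by move=> a b; rewrite /tens ipBr scalerBl. Qed.

Lemma Scov_hatB {X : Type} (Rx : X -> H) K n x :
  {morph Scov_hat ip Rx K n x : a b / a - b}.
Proof.
move=> a b; rewrite /Scov_hat -scalerBr -sumrB.
by congr (_ *: _); apply: eq_bigr => t _; exact: tensB.
Qed.

Lemma Scr_hatB {X : Type} (Rx : X -> H) K n w gamma x :
  {morph Scr_hat ip Rx K n w gamma x : a b / a - b}.
Proof.
move=> a b; rewrite /Scr_hat -scalerBr -sumrB.
by congr (_ *: _); apply: eq_bigr => t _; exact: tensB.
Qed.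

Lemma ip_normal_eq_error (S C : H -> H) (y r th ts : H) (lam : R) :
  {morph S : a b / a - b} -> {morph C : a b / a - b} ->
  S th + lam *: th = (S r + lam *: r) + y + C th ->
  ip (th - ts) (S (r - ts) + y + C ts) + lam * ip (th - ts) (r - ts) =
  ip (th - ts) (S (th - ts) - C (th - ts)) + lam * ip (th - ts) (th - ts).
Proof.
move=> SB CB /(congr1 (ip (th - ts))).
rewrite !(SB, CB, ipDr, ipNr, ipZr); lra.
Qed.

End inner_product.

Section rho.
Context {R : realType} {d : measure_display} {X : measurableType d}.
Variables (P : R.-pker X ~> X) (mu : probability X R).
Variables (K : nat) (w : nat -> R) (gamma : R).
Hypotheses (Pmu : stationary P mu) (w_simplex : in_simplex K w).
Hypothesis gamma01 : 0 <= gamma <= 1.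

Let wgamma_ge0 k : (1 <= k <= K)%N -> 0 <= w k * gamma ^+ k.
Proof.
move=> kK; apply: mulr_ge0; first exact: w_simplex.1.
by apply: exprn_ge0; case/andP: gamma01.
Qed.

Lemma gbar_le1 : gbar K w gamma <= 1.
Proof.
case: w_simplex => w_ge0 <-; apply: ler_sum_nat => k kK.
by apply: ler_piMr; [exact: w_ge0 | apply: exprn_ile1; case/andP: gamma01].
Qed.

Lemma muNorm2_ge0 f : 0 <= muNorm2 mu f.
Proof. by apply: Rintegral_ge0 => y _; exact: sqr_ge0. Qed.

Lemma gbar_muNorm2_le f : bounded_measurable f ->
  (1 - gbar K w gamma) * muNorm2 mu f <=
  Epair P mu 0 f f - \sum_(1 <= k < K.+1) w k * gamma ^+ k * Epair P mu k f f.
Proof.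
move=> bf; have -> : Epair P mu 0 f f = muNorm2 mu f.
  by apply: eq_Rintegral => y _; rewrite expr2.
rewrite mulrBl mul1r lerD2l lerN2 /gbar mulr_suml.
apply: ler_sum_nat => k kK; apply: ler_wpM2l; first exact: wgamma_ge0.
exact: Epair_le_muNorm2.
Qed.

Lemma sqr_rho f : bounded_measurable f ->
  rho P mu K w gamma f ^+ 2 =
  Epair P mu 0 f f - \sum_(1 <= k < K.+1) w k * gamma ^+ k * Epair P mu k f f.
Proof.
move=> bf; rewrite sqr_sqrtr //; apply: le_trans (gbar_muNorm2_le bf).
by apply: mulr_ge0; [rewrite subr_ge0; exact: gbar_le1 | exact: muNorm2_ge0].
Qed.

End rho.

Theorem lemma1 (R : realType) (d : measure_display) (X : measurableType d)
  (P : R.-pker X ~> X) (mu : probability X R)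
  (H : lmodType R) (ip : H -> H -> R) (Rx : X -> H)
  (r : X -> R) (rH : H) (gamma : R) (K n : nat) (w : nat -> R) (lam : R)
  (x : nat -> X)
  (Scov Scr : H -> H) (y0 theta_star theta_hat : H) :
  stationary P mu ->
  is_rkhs ip Rx ->
  (* bounded kernel, measurable elements *)
  (exists kappa : R, forall z, ip (Rx z) (Rx z) <= kappa) ->
  (forall f, measurable_fun setT (ev ip Rx f)) ->
  (* H contains the constants and r *)
  (exists c : H, forall z, ev ip Rx c z = 1) ->
  (forall z, ev ip Rx rH z = r z) ->
  0 <= gamma < 1 -> (1 <= K)%N -> in_simplex K w -> (K < n)%N -> 0 < lam ->
  (* population operators, in weak (pairing) form:
     Sigma_cov = E[R_{X0} (x) R_{X0}],
     Sigma_cr  = E[R_{X0} (x) sum_k w_k gamma^k R_{Xk}],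
     y0        = E[R_{X0} sum_k w_k sum_{l=1}^{k-1} gamma^l r(X_l)] *)
  (forall f g, ip g (Scov f) = Epair P mu 0 (ev ip Rx g) (ev ip Rx f)) ->
  (forall f g, ip g (Scr f) =
     \sum_(1 <= k < K.+1) w k * gamma ^+ k * Epair P mu k (ev ip Rx g) (ev ip Rx f)) ->
  (forall g, ip g y0 =
     \sum_(1 <= k < K.+1) w k * \sum_(1 <= l < k) gamma ^+ l * Epair P mu l (ev ip Rx g) r) ->
  Scov theta_star = Scov rH + y0 + Scr theta_star ->
  Scov_hat ip Rx K n x theta_hat + lam *: theta_hat =
    (Scov_hat ip Rx K n x rH + lam *: rH) + y_hat Rx K n w gamma r x
      + Scr_hat ip Rx K n w gamma x theta_hat ->
  let Delta := theta_hat - theta_star in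
  let T1 := ip Delta (Scov_hat ip Rx K n x (rH - theta_star)
                      + y_hat Rx K n w gamma r x
                      + Scr_hat ip Rx K n w gamma x theta_star) in
  let T2 := lam * ip Delta (rH - theta_star) in
  let Gamma := fun f => Scov f - Scr f in
  let Gamma_hat := fun f => Scov_hat ip Rx K n x f - Scr_hat ip Rx K n w gamma x f in
  let T3 := ip Delta (Gamma Delta - Gamma_hat Delta) in
  (1 - gbar K w gamma) * muNorm2 mu (ev ip Rx Delta)
     <= rho P mu K w gamma (ev ip Rx Delta) ^+ 2
  /\ rho P mu K w gamma (ev ip Rx Delta) ^+ 2 = T1 + T2 + T3 - lam * ip Delta Delta.
Proof.
move=> Pmu [[ip_linear ipC ip_ge0 _ _] _] [kappa Rx_kappa] meas _ _ /andP[gamma0 gamma1]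
  _ w_simplex _ _ Scov_ip Scr_ip _ _ normal_eq Delta T1 T2 Gamma Gamma_hat T3.
have gamma01 : 0 <= gamma <= 1 by rewrite gamma0 ltW.
have bDelta := bounded_measurable_ev ip_linear ipC ip_ge0 Rx_kappa (meas Delta).
rewrite (sqr_rho Pmu w_simplex gamma01 bDelta); split; first exact: gbar_muNorm2_le.
have := ip_normal_eq_error ip_linear ipC theta_star
  (Scov_hatB ip_linear ipC Rx K n x) (Scr_hatB ip_linear ipC Rx K n w gamma x) normal_eq.
rewrite -Scov_ip -Scr_ip /T1 /T2 /T3 /Gamma /Gamma_hat !(ipBr ip_linear ipC); lra.
Qed.
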